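(* Let $I\subset K[x,y]$ be a monomial ideal with $G(I)=\{u_0,\ldots,u_m\}$, $u_i=x^{a_i}y^{b_i}$, ordered so that $a_0>\cdots>a_m$ and $b_0<\cdots<b_m$, and write $I=x^{a_m}y^{b_0}J$ (so $J$ is the monomial ideal generated by $u_i/(x^{a_m}y^{b_0})$, $i=0,\dots,m$). Then $I$ is componentwise polymatroidal if and only if $J$ is a $yx$-tight ideal.
   Context: A monomial ideal generated in a single degree is polymatroidal if for all $u,v\in G(I)$ and all variables $z$ with $\deg_{z}(u)>\deg_{z}(v)$ there exists a variable $w$ with $\deg_{w}(u)<\deg_{w}(v)$ and $w(u/z)\in I$ ($\deg_z$ = exponent of $z$, $G(\cdot)$ = minimal monomial generating set). $I_{\langle j\rangle}$ is the ideal generated by all degree-$j$ monomials of $I$; $I$ is componentwise polymatroidal if every nonzero $I_{\langle j\rangle}$ is polymatroidal. Let $J\subset K[x,y]$ be a $(x,y)$-primary monomial ideal with $G(J)=\{x^{\alpha_i}y^{\beta_i}: i=0,\ldots,m\}$ ordered so that $\alpha_0>\cdots>\alpha_m=0$ and $0=\beta_0<\cdots<\beta_m$. $J$ is $x$-tight if $\alpha_{m-i}=i$ for all $i=0,\ldots,m$; $y$-tight if $\beta_i=i$ for all $i=0,\ldots,m$; $yx$-tight if there exists $0\le j\le m$ with $\beta_i=i$ for all $i=0,\ldots,j$ and $\alpha_{m-i}=i$ for all $i=0,\ldots,m-j$. *)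

(* Monomials of K[x,y] are encoded by their exponent vectors
   (deg_x, deg_y) : nat * nat; a monomial ideal is encoded by the set
   (predicate) of monomials it contains.  All notions below (minimal
   generators, I_<j>, polymatroidal, tightness) depend only on this set,
   not on the field K. *)
From mathcomp Require Import all_boot.
Set Implicit Arguments. Unset Strict Implicit. Unset Printing Implicit Defensive.

Definition mon := (nat * nat)%type.

(* variables: false = x, true = y *)
Definition var := bool.

Definition degv (z : var) (u : mon) : nat := if z then u.2 else u.1.

Definition tdeg (u : mon) : nat := u.1 + u.2.

Definition mdiv (u v : mon) : Prop := u.1 <= v.1 /\ u.2 <= v.2.

Definition monideal := mon -> Prop.

Definition gen_ideal (gs : seq mon) : monideal :=
  fun u => exists2 g, g \in gs & mdiv g u.

Definition mingens (I : monideal) : mon -> Prop :=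
  fun u => I u /\ forall v, I v -> mdiv v u -> v = u.

Definition comp (I : monideal) (j : nat) : monideal :=
  fun u => exists v, I v /\ tdeg v = j /\ mdiv v u.

Definition exch (w z : var) (u : mon) : mon :=
  let u' := if z then (u.1, u.2.-1) else (u.1.-1, u.2) in
  if w then (u'.1, u'.2.+1) else (u'.1.+1, u'.2).

Definition single_degree (I : monideal) : Prop :=
  exists d, forall u, mingens I u -> tdeg u = d.

Definition polymatroidal (I : monideal) : Prop :=
  single_degree I /\
  forall u v, mingens I u -> mingens I v ->
  forall z : var, degv z v < degv z u ->
  exists w : var, degv w u < degv w v /\ I (exch w z u).

Definition nonzero_ideal (I : monideal) : Prop := exists u, I u.

Definition componentwise_polymatroidal (I : monideal) : Prop :=
  forall j, nonzero_ideal (comp I j) -> polymatroidal (comp I j).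

(* Tightness of an (x,y)-primary ideal J with ordered minimal generators
   x^(alpha i) y^(beta i), i = 0..m, alpha decreasing to 0, beta increasing from 0. *)
Definition x_tight (m : nat) (alpha beta : nat -> nat) : Prop :=
  forall i, i <= m -> alpha (m - i) = i.

Definition y_tight (m : nat) (alpha beta : nat -> nat) : Prop :=
  forall i, i <= m -> beta i = i.

Definition yx_tight (m : nat) (alpha beta : nat -> nat) : Prop :=
  exists2 j, j <= m &
    (forall i, i <= j -> beta i = i) /\
    (forall i, i <= m - j -> alpha (m - i) = i).

From Pilot Require Import Defs.
From mathcomp Require Import all_boot.
From mathcomp Require Import zify.
Set Implicit Arguments.
Unset Strict Implicit.

(* In two variables the degree-D component I_<D> of a monomial ideal I is
   minimally generated by the degree-D monomials of I, and these all lie on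
   the antidiagonal u.1 + u.2 = D.  The exchange condition of polymatroidality
   then says exactly that, walking along the antidiagonal, the monomials of I
   form an interval (no "holes").  So I is componentwise polymatroidal iff it
   is antidiagonally convex in every degree (lemma [cwpm_iff_convex]).
   For the staircase ideal generated by (a i, b i), a strictly decreasing and
   b strictly increasing, call i a "y-gap" if b i.+1 >= b i + 2 and an "x-gap"
   if a i >= a i.+1 + 2.
   - If some y-gap i precedes some x-gap i' (i <= i'), the inner corner
     (a k - 1, b k.+1 - 1) for a suitable k in [i, i'] is a hole between two
     monomials of I of the same degree, so convexity fails ([no_gap_pair]).
   - Without such a pair, b moves by unit steps up to some index j and a
     moves by unit steps from j on ([split_of_no_gap_pair]); such a split makes
     every degree convex ([split_convex]).
   A split at j is exactly the yx-tightness of the normalised exponents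
   ([yx_tight_split]), which gives corollary2p7. *)

Definition convex_in_degree (I : monideal) (D : nat) : Prop :=
  forall u v w, I u -> I v -> tdeg u = D -> tdeg v = D -> tdeg w = D ->
  u.1 <= w.1 <= v.1 -> I w.

Lemma mdiv_eq (u v : mon) : mdiv u v -> tdeg u = tdeg v -> u = v.
Proof.
case: u v => [u1 u2] [v1 v2]; rewrite /mdiv /tdeg /= => -[h1 h2] h.
by congr pair; lia.
Qed.

Lemma antidiag_eq (u : mon) (D : nat) : tdeg u = D -> u = (u.1, D - u.1).
Proof. by case: u => u1 u2; rewrite /tdeg /= => <-; congr pair; lia. Qed.

Lemma mdiv_refl (u : mon) : mdiv u u.
Proof. by split. Qed.

Lemma comp_deg (I : monideal) (D : nat) (w : mon) :
  Defs.comp I D w -> tdeg w = D -> I w.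
Proof. by move=> [v [Iv [dv mv]]] dw; rewrite -(mdiv_eq mv) ?dv ?dw. Qed.

Lemma comp_of_mem (I : monideal) (D : nat) (w : mon) :
  I w -> tdeg w = D -> Defs.comp I D w.
Proof. by move=> Iw dw; exists w; split; [|split; [|apply: mdiv_refl]]. Qed.

Lemma mingens_compP (I : monideal) (D : nat) (u : mon) :
  mingens (Defs.comp I D) u <-> I u /\ tdeg u = D.
Proof.
split.
- move=> [[v [Iv [dv mv]]] hmin].
  by rewrite -(hmin v (comp_of_mem Iv dv) mv).
- move=> [Iu du]; split; first exact: comp_of_mem.
  move=> v [v' [Iv' [dv' mv']]] mv.
  have e : v' = u.
    apply: mdiv_eq; last by rewrite dv' du.
    by case: mv' mv => ? ? [? ?]; split; lia.
  subst v'; apply: mdiv_eq => //.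
  by case: mv mv' => ? ? [? ?]; rewrite /tdeg; lia.
Qed.

Lemma polymatroidal_comp_step (I : monideal) (D : nat) (u v : mon) :
  polymatroidal (Defs.comp I D) -> I u -> I v -> tdeg u = D -> tdeg v = D ->
  u.1 < v.1 -> I (u.1.+1, u.2.-1).
Proof.
move=> [_ Hex] Iu Iv du dv lt_uv.
have Gu := proj2 (mingens_compP I D u) (conj Iu du).
have Gv := proj2 (mingens_compP I D v) (conj Iv dv).
rewrite /tdeg in du dv.
have [[|] [/= hw Iw]] := Hex u v Gu Gv true ltac:(simpl; lia); first lia.
by apply: comp_deg Iw _; rewrite /tdeg /=; lia.
Qed.

Lemma cwpm_iff_convex (I : monideal) :
  componentwise_polymatroidal I <-> forall D, convex_in_degree I D.
Proof.
split.
- move=> CP D u v w Iu Iv du dv dw /andP[uw wv].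
  have walk : forall t, t <= v.1 - u.1 -> I (u.1 + t, D - (u.1 + t)).
    elim=> [|t IH] ht; first by rewrite addn0 -(antidiag_eq du).
    have Ip := IH ltac:(lia).
    have := polymatroidal_comp_step (CP D (ex_intro _ u (comp_of_mem Iu du)))
      Ip Iv ltac:(rewrite /tdeg /= in dv *; lia) dv ltac:(simpl; lia).
    by rewrite /=; congr I; congr pair; lia.
  by rewrite (antidiag_eq dw) (_ : w.1 = u.1 + (w.1 - u.1)); [apply: walk|]; lia.
- move=> CV D _; split; first by exists D => u /mingens_compP[].
  move=> u v /mingens_compP[Iu du] /mingens_compP[Iv dv] z.
  rewrite /tdeg in du dv; case: z => /= hz.
  + exists false; split => /=; first lia.
    apply: comp_of_mem; last by rewrite /tdeg /=; lia.
    by apply: (CV D u v) => //=; rewrite /tdeg /=; lia.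
  + exists true; split => /=; first lia.
    apply: comp_of_mem; last by rewrite /tdeg /=; lia.
    by apply: (CV D v u) => //=; rewrite /tdeg /=; lia.
Qed.

Lemma decr_gap (m : nat) (f : nat -> nat) :
  (forall i, i < m -> f i.+1 < f i) ->
  forall g k, g <= k -> k <= m -> f k + (k - g) <= f g.
Proof.
move=> hf g; elim=> [|k IH] hg hk; first by rewrite (_ : g = 0); lia.
case: (leqP g k) => hgk; last by rewrite (_ : g = k.+1); lia.
by have := IH hgk ltac:(lia); have := hf k ltac:(lia); lia.
Qed.

Lemma incr_gap (m : nat) (f : nat -> nat) :
  (forall i, i < m -> f i < f i.+1) ->
  forall g k, g <= k -> k <= m -> f g + (k - g) <= f k.
Proof.
move=> hf g; elim=> [|k IH] hg hk; first by rewrite (_ : g = 0); lia.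
case: (leqP g k) => hgk; last by rewrite (_ : g = k.+1); lia.
by have := IH hgk ltac:(lia); have := hf k ltac:(lia); lia.
Qed.

Lemma argmax_interval (f : nat -> nat) (i j : nat) : i <= j ->
  exists2 k, i <= k <= j & forall l, i <= l <= j -> f l <= f k.
Proof.
elim: j => [|j IH] hij.
  exists i => [|l hl]; first lia.
  by have -> : l = i by lia.
case: (leqP i j) => [/IH [k hk Hk] | hji]; last first.
  exists j.+1 => [|l hl]; first lia.
  by rewrite (_ : l = j.+1); lia.
case: (leqP (f k) (f j.+1)) => hkj.
- exists j.+1 => [|l hl]; first lia.
  case: (leqP l j) => hl'; first by have := Hk l ltac:(lia); lia.
  by rewrite (_ : l = j.+1); lia.
- exists k => [|l hl]; first lia.
  case: (leqP l j) => hl'; first by apply: Hk; lia.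
  by rewrite (_ : l = j.+1); lia.
Qed.

Section Staircase.

Variables (m : nat) (a b : nat -> nat).
Hypothesis ha : forall i, i < m -> a i.+1 < a i.
Hypothesis hb : forall i, i < m -> b i < b i.+1.

Local Notation I := (gen_ideal [seq (a i, b i) | i <- iota 0 m.+1]).

Lemma memI (u : mon) : I u <-> exists2 c, c <= m & a c <= u.1 /\ b c <= u.2.
Proof.
split.
- move=> [g /mapP [c]]; rewrite mem_iota => /andP[_ hc] -> [h1 h2].
  by exists c; [lia | split].
- move=> [c hc [h1 h2]]; exists (a c, b c); last by split.
  by apply/mapP; exists c => //; rewrite mem_iota; apply/andP; split; lia.
Qed.

Lemma corner_notin (k : nat) : k < m -> ~ I (a k - 1, b k.+1 - 1).
Proof.
move=> hk /memI [c hc [/= h1 h2]]; have := ha hk; have := hb hk.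
case: (leqP c k) => ck.
- by have := decr_gap ha ck (ltnW hk); lia.
- by have := incr_gap hb ck hc; lia.
Qed.

(* y-tight up to j and x-tight from j on, in unnormalised form. *)
Definition tight_split (j : nat) : Prop :=
  (forall i, i <= j -> b i = b 0 + i) /\
  (forall k, j <= k <= m -> a k = a m + (m - k)).

(* Under a split, degree-D monomials of I form an antidiagonal interval:
   for w between u and v, the first generator c with a c <= w.1 also has
   b c <= w.2, since otherwise the unit steps on one side of j would push
   u or v out of I. *)
Lemma split_convex (j : nat) : j <= m -> tight_split j ->
  forall D, convex_in_degree I D.
Proof.
move=> hj [Hb Ha] D u v w /memI[g hg [ug1 ug2]] /memI[h hh [vh1 vh2]] du dv dw.
rewrite /tdeg in du dv dw => /andP[uw wv].
have ex : exists n, (n <= m) && (a n <= w.1) by exists g; apply/andP; split; lia.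
case: (ex_minnP ex) => c /andP[hc hcw] hmin.
apply/memI; exists c => //; split => //.
rewrite leqNgt; apply/negP => hbc.
have cg : c <= g by apply: hmin; apply/andP; split; lia.
have hc_gt_h : h < c by rewrite ltnNge; apply/negP => ch; have := incr_gap hb ch hh; lia.
have hprev : w.1 < a c.-1.
  by rewrite ltnNge; apply/negP => H; have := hmin c.-1 ltac:(apply/andP; split; lia); lia.
case: (leqP c j) => cj.
- have := Hb h ltac:(lia); have := Hb c cj.
  by have := decr_gap ha (g := h) (k := c.-1) ltac:(lia) ltac:(lia); lia.
- have := Ha c.-1 ltac:(lia); have := Ha c ltac:(lia); have := Ha g ltac:(lia).
  by have := incr_gap hb cg hg; lia.
Qed.

(* Convexity forbids a y-gap at i followed by an x-gap at i' >= i: for k in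
   [i, i'] maximising a k + b k.+1, the corner at k has degree
   a k + b k.+1 - 2 and lies between the monomials of that degree lying
   over the generators i'.+1 and i. *)
Lemma no_gap_pair : (forall D, convex_in_degree I D) ->
  forall i i', i <= i' < m -> b i + 2 <= b i.+1 -> a i'.+1 + 2 <= a i' -> False.
Proof.
move=> CV i i' /andP[hii' hi'm] ygap xgap.
have [k /andP[ik ki'] Hk] := argmax_interval (fun k => a k + b k.+1) hii'.
have /= fi := Hk i ltac:(lia); have /= fi' := Hk i' ltac:(lia).
set D := a k + b k.+1 - 2.
have aki := decr_gap ha ik ltac:(lia).
have aki' := decr_gap ha ki' ltac:(lia).
have bki := incr_gap hb (g := i.+1) (k := k.+1) ltac:(lia) ltac:(lia).
have Iu : I (a i'.+1, D - a i'.+1) by apply/memI; exists i'.+1; rewrite /=; lia.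
have Iv : I (a i, D - a i) by apply/memI; exists i; rewrite /=; lia.
apply: (corner_notin (k := k)); first lia.
apply: (CV D _ _ _ Iu Iv); rewrite /tdeg /=; lia.
Qed.

(* Without a y-gap before an x-gap, take j minimal with j = m or a y-gap at j:
   b has unit steps before j, and a has unit steps from j on. *)
Lemma split_of_no_gap_pair :
  (forall i i', i <= i' < m -> b i + 2 <= b i.+1 -> a i'.+1 + 2 <= a i' -> False) ->
  exists2 j, j <= m & tight_split j.
Proof.
move=> nogap.
have ex : exists n, (n == m) || ((n < m) && (b n + 2 <= b n.+1)) by exists m; rewrite eqxx.
case: (ex_minnP ex) => j Pj hmin.
have hj : j <= m by case/orP: Pj => [/eqP -> | /andP[? _]]; lia.
exists j => //; split.
- elim=> [|i IH] hi; first by rewrite addn0.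
  have := IH ltac:(lia); have := @hb i ltac:(lia).
  case: (leqP (b i + 2) (b i.+1)) => h; last by lia.
  by have := hmin i ltac:(apply/orP; right; apply/andP; split; lia); lia.
- have astep : forall k, j <= k < m -> a k = a k.+1 + 1.
    move=> k /andP[hjk hkm]; have := ha hkm.
    case: (leqP (a k.+1 + 2) (a k)) => h; last by lia.
    have ygap : b j + 2 <= b j.+1 by case/orP: Pj => [/eqP ej | /andP[_ //]]; lia.
    by case: (nogap j k ltac:(lia) ygap h).
  suff H : forall n k, k + n = m -> j <= k -> a k = a m + n.
    by move=> k /andP[hjk hkm]; apply: H; lia.
  elim=> [|n IH] k hkn hjk; first by rewrite addn0 -hkn addn0.
  by rewrite (astep k ltac:(lia)) (IH k.+1 ltac:(lia) ltac:(lia)); lia.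
Qed.

Lemma yx_tight_split :
  yx_tight m (fun i => a i - a m) (fun i => b i - b 0) <->
  exists2 j, j <= m & tight_split j.
Proof.
split.
- move=> [j hj [Hb Ha]]; exists j => //; split.
  + move=> i hi; have := Hb i hi.
    by have := incr_gap hb (g := 0) (k := i) ltac:(lia) ltac:(lia); lia.
  + move=> k /andP[hjk hkm]; have := Ha (m - k) ltac:(lia).
    rewrite (_ : m - (m - k) = k); last by lia.
    by have := decr_gap ha hkm (leqnn m); lia.
- move=> [j hj [Hb Ha]]; exists j => //; split.
  + by move=> i hi; rewrite (Hb i hi); lia.
  + by move=> i hi; rewrite (Ha (m - i) ltac:(lia)); lia.
Qed.

End Staircase.

Theorem corollary2p7 (m : nat) (a b : nat -> nat)
  (ha : forall i, i < m -> a i.+1 < a i)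
  (hb : forall i, i < m -> b i < b i.+1) :
  componentwise_polymatroidal (gen_ideal [seq (a i, b i) | i <- iota 0 m.+1])
  <->
  yx_tight m (fun i => a i - a m) (fun i => b i - b 0).
Proof.
rewrite cwpm_iff_convex yx_tight_split //; split.
- by move=> CV; apply: split_of_no_gap_pair => //; exact: no_gap_pair.
- by move=> [j hj hsplit]; exact: split_convex hsplit.
Qed.
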